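(* Let $\mathbb{C}$ be a regular Mal'tsev category. Then $\mathbb{C}$ is congruence distributive if and only if $\mathbb{C}$ is a majority category.
   Context: A category is regular if it has finite limits and coequalizers of kernel pairs and regular epimorphisms are pullback-stable. A finitely complete category is Mal'tsev if every reflexive relation (subobject of $X\times X$ containing the diagonal) is an equivalence relation. In a regular Mal'tsev category, for equivalence relations $\alpha,\beta$ on $X$ the join in the poset of equivalence relations on $X$ exists and equals the relational composite $\alpha\circ\beta$, where the composite of relations represented by $(r_1,r_2):R_0\to X\times X$ and $(s_1,s_2):S_0\to X\times X$ is the image (regular epi–mono factorization) of $(r_1p_1,s_2p_2):P\to X\times X$, $(P,p_1,p_2)$ the pullback of $s_1$ along $r_2$. $\mathbb{C}$ is congruence distributive if for every object $X$ the lattice of equivalence relations on $X$ is distributive. For $w:S\to W$ and subobject $A$ of $W$, $w\in_S A$ means $w$ factors through a representative of $A$. A ternary relation $R\leqslant X\times Y\times Z$ is majority-selecting if for all $S$ and $x,x':S\to X$, $y,y':S\to Y$, $z,z':S\to Z$: $(x,y,z')\in_S R$, $(x,y',z)\in_S R$, $(x',y,z)\in_S R$ imply $(x,y,z)\in_S R$; a majority category is one in which every ternary relation is majority-selecting. *)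

Set Implicit Arguments.
Unset Strict Implicit.

Record Category := {
  Ob :> Type;
  Hom : Ob -> Ob -> Type;
  idm : forall A, Hom A A;
  comp : forall A B C, Hom B C -> Hom A B -> Hom A C;
  comp_id_l : forall A B (f : Hom A B), comp (idm B) f = f;
  comp_id_r : forall A B (f : Hom A B), comp f (idm A) = f;
  comp_assoc : forall A B C D (h : Hom C D) (g : Hom B C) (f : Hom A B),
      comp h (comp g f) = comp (comp h g) f
}.
Arguments Hom {c} _ _.
Arguments idm {c} _.
Arguments comp {c A B C} _ _.
Declare Scope cat_scope.
Notation "g \o f" := (comp g f) (at level 40, left associativity) : cat_scope.
Open Scope cat_scope.

Section Defs.
Variable C : Category.

Definition is_terminal (T : C) : Prop :=
  forall A : C, exists t : Hom A T, forall t' : Hom A T, t' = t.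

Definition is_product (X Y P : C) (p1 : Hom P X) (p2 : Hom P Y) : Prop :=
  forall (S : C) (f : Hom S X) (g : Hom S Y),
    exists h : Hom S P, p1 \o h = f /\ p2 \o h = g /\
      forall h' : Hom S P, p1 \o h' = f -> p2 \o h' = g -> h' = h.

Definition is_equalizer (X Y E : C) (f g : Hom X Y) (e : Hom E X) : Prop :=
  f \o e = g \o e /\
  forall (S : C) (k : Hom S X), f \o k = g \o k ->
    exists h : Hom S E, e \o h = k /\ forall h' : Hom S E, e \o h' = k -> h' = h.

Definition is_pullback (A B Z P : C) (f : Hom A Z) (g : Hom B Z)
    (p1 : Hom P A) (p2 : Hom P B) : Prop :=
  f \o p1 = g \o p2 /\
  forall (S : C) (a : Hom S A) (b : Hom S B), f \o a = g \o b ->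
    exists h : Hom S P, p1 \o h = a /\ p2 \o h = b /\
      forall h' : Hom S P, p1 \o h' = a -> p2 \o h' = b -> h' = h.

Definition has_finite_limits : Prop :=
  (exists T : C, is_terminal T) /\
  (forall X Y : C, exists P (p1 : Hom P X) (p2 : Hom P Y), is_product p1 p2) /\
  (forall (X Y : C) (f g : Hom X Y), exists E (e : Hom E X), is_equalizer f g e).

Definition is_coequalizer (X Y Q : C) (f g : Hom X Y) (q : Hom Y Q) : Prop :=
  q \o f = q \o g /\
  forall (S : C) (k : Hom Y S), k \o f = k \o g ->
    exists h : Hom Q S, h \o q = k /\ forall h' : Hom Q S, h' \o q = k -> h' = h.

Definition regular_epi (Y Q : C) (q : Hom Y Q) : Prop :=
  exists (X : C) (f g : Hom X Y), is_coequalizer f g q.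

Definition is_regular : Prop :=
  has_finite_limits /\
  (forall (A B : C) (f : Hom A B) (K : C) (k1 k2 : Hom K A),
      is_pullback f f k1 k2 -> exists Q (q : Hom A Q), is_coequalizer k1 k2 q) /\
  (forall (A B Z P : C) (q : Hom A Z) (g : Hom B Z) (p1 : Hom P A) (p2 : Hom P B),
      regular_epi q -> is_pullback q g p1 p2 -> regular_epi p2).

(** A relation R <= X x Y (resp. X x Y x Z) is represented by a
    jointly monic span (= a mono into the product, up to the canonical
    correspondence), and subobjects are handled through representatives. *)
Definition jointly_monic2 (R X Y : C) (r1 : Hom R X) (r2 : Hom R Y) : Prop :=
  forall (S : C) (h k : Hom S R), r1 \o h = r1 \o k -> r2 \o h = r2 \o k -> h = k.

Definition jointly_monic3 (R X Y Z : C) (r1 : Hom R X) (r2 : Hom R Y)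
    (r3 : Hom R Z) : Prop :=
  forall (S : C) (h k : Hom S R),
    r1 \o h = r1 \o k -> r2 \o h = r2 \o k -> r3 \o h = r3 \o k -> h = k.

(** generalized membership  (x,y) \in_S R  : factoring through R *)
Definition mem2 (R X Y S : C) (r1 : Hom R X) (r2 : Hom R Y)
    (x : Hom S X) (y : Hom S Y) : Prop :=
  exists h : Hom S R, r1 \o h = x /\ r2 \o h = y.

Definition mem3 (R X Y Z S : C) (r1 : Hom R X) (r2 : Hom R Y) (r3 : Hom R Z)
    (x : Hom S X) (y : Hom S Y) (z : Hom S Z) : Prop :=
  exists h : Hom S R, r1 \o h = x /\ r2 \o h = y /\ r3 \o h = z.

Definition relation_on (X R : C) (r1 r2 : Hom R X) : Prop := jointly_monic2 r1 r2.

Definition reflexive_rel (X R : C) (r1 r2 : Hom R X) : Prop :=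
  exists d : Hom X R, r1 \o d = idm X /\ r2 \o d = idm X.

Definition symmetric_rel (X R : C) (r1 r2 : Hom R X) : Prop :=
  forall (S : C) (x y : Hom S X), mem2 r1 r2 x y -> mem2 r1 r2 y x.

Definition transitive_rel (X R : C) (r1 r2 : Hom R X) : Prop :=
  forall (S : C) (x y z : Hom S X),
    mem2 r1 r2 x y -> mem2 r1 r2 y z -> mem2 r1 r2 x z.

Definition equivalence_rel (X R : C) (r1 r2 : Hom R X) : Prop :=
  relation_on r1 r2 /\ reflexive_rel r1 r2 /\ symmetric_rel r1 r2 /\
  transitive_rel r1 r2.

Definition rel_le (X R R' : C) (r1 r2 : Hom R X) (r1' r2' : Hom R' X) : Prop :=
  exists h : Hom R R', r1' \o h = r1 /\ r2' \o h = r2.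

Definition is_maltsev : Prop :=
  has_finite_limits /\
  forall (X R : C) (r1 r2 : Hom R X),
    relation_on r1 r2 -> reflexive_rel r1 r2 -> equivalence_rel r1 r2.

Definition is_eq_meet (X A B M : C) (a1 a2 : Hom A X) (b1 b2 : Hom B X)
    (m1 m2 : Hom M X) : Prop :=
  equivalence_rel m1 m2 /\ rel_le m1 m2 a1 a2 /\ rel_le m1 m2 b1 b2 /\
  forall (T : C) (t1 t2 : Hom T X), equivalence_rel t1 t2 ->
    rel_le t1 t2 a1 a2 -> rel_le t1 t2 b1 b2 -> rel_le t1 t2 m1 m2.

Definition is_eq_join (X A B J : C) (a1 a2 : Hom A X) (b1 b2 : Hom B X)
    (j1 j2 : Hom J X) : Prop :=
  equivalence_rel j1 j2 /\ rel_le a1 a2 j1 j2 /\ rel_le b1 b2 j1 j2 /\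
  forall (T : C) (t1 t2 : Hom T X), equivalence_rel t1 t2 ->
    rel_le a1 a2 t1 t2 -> rel_le b1 b2 t1 t2 -> rel_le j1 j2 t1 t2.

(** Congruence distributive: for every X, Eq(X) is a lattice (binary meets
    and joins exist) and it is distributive:
      a /\ (b \/ c) = (a /\ b) \/ (a /\ c). *)
Definition congruence_distributive : Prop :=
  forall X : C,
    (forall (A B : C) (a1 a2 : Hom A X) (b1 b2 : Hom B X),
        equivalence_rel a1 a2 -> equivalence_rel b1 b2 ->
        (exists M (m1 m2 : Hom M X), is_eq_meet a1 a2 b1 b2 m1 m2) /\
        (exists J (j1 j2 : Hom J X), is_eq_join a1 a2 b1 b2 j1 j2)) /\
    (forall (A B D : C) (a1 a2 : Hom A X) (b1 b2 : Hom B X) (c1 c2 : Hom D X)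
            (BC : C) (bc1 bc2 : Hom BC X)
            (L : C) (l1 l2 : Hom L X)
            (AB : C) (ab1 ab2 : Hom AB X)
            (AC : C) (ac1 ac2 : Hom AC X)
            (Rr : C) (rr1 rr2 : Hom Rr X),
        equivalence_rel a1 a2 -> equivalence_rel b1 b2 -> equivalence_rel c1 c2 ->
        is_eq_join b1 b2 c1 c2 bc1 bc2 ->
        is_eq_meet a1 a2 bc1 bc2 l1 l2 ->
        is_eq_meet a1 a2 b1 b2 ab1 ab2 ->
        is_eq_meet a1 a2 c1 c2 ac1 ac2 ->
        is_eq_join ab1 ab2 ac1 ac2 rr1 rr2 ->
        rel_le l1 l2 rr1 rr2 /\ rel_le rr1 rr2 l1 l2).

Definition majority_selecting (R X Y Z : C) (r1 : Hom R X) (r2 : Hom R Y)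
    (r3 : Hom R Z) : Prop :=
  forall (S : C) (x x' : Hom S X) (y y' : Hom S Y) (z z' : Hom S Z),
    mem3 r1 r2 r3 x y z' -> mem3 r1 r2 r3 x y' z -> mem3 r1 r2 r3 x' y z ->
    mem3 r1 r2 r3 x y z.

Definition is_majority : Prop :=
  forall (R X Y Z : C) (r1 : Hom R X) (r2 : Hom R Y) (r3 : Hom R Z),
    jointly_monic3 r1 r2 r3 -> majority_selecting r1 r2 r3.

End Defs.

(* In a regular category membership of generalized elements in a relation
   descends along regular epimorphisms, and (x, z) lies in the image of the
   composite a o b exactly when, after a regular-epi cover, x a y b z for some
   y; in the Mal'tsev case this image is the join a \/ b.

   Distributive => majority: for R <= X x Y x Z let a, b, c be the kernel pairs
   of the three projections.  The witnesses u, v, w of the three hypotheses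
   satisfy u a v and u b w c v, so distributivity gives, locally, t with
   u (a /\ b) t (a /\ c) v; then t witnesses (x, y, z) in R.

   Majority => distributive: given x a z and x b y c z, the fan relation
   {(p, q, s) | exists w, w b p, w a q, w c s} contains (x, x, x), (x, y, z)
   and (z, x, z); majority puts (x, x, z) in it, and its witness w satisfies
   x (a /\ b) w (a /\ c) z. *)

From Stdlib Require Import Setoid.
Set Implicit Arguments.
Unset Strict Implicit.

Section RegularMaltsev.
Variable C : Category.

Definition monic (A B : C) (m : Hom A B) : Prop :=
  forall (S : C) (u v : Hom S A), m \o u = m \o v -> u = v.

Definition locally (S : C) (P : forall S' : C, Hom S' S -> Prop) : Prop :=
  exists (S' : C) (e : Hom S' S), regular_epi e /\ P S' e.

Definition mem2_rcomp (X A B S : C) (a1 a2 : Hom A X) (b1 b2 : Hom B X)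
    (x z : Hom S X) : Prop :=
  locally (fun S' e => exists y : Hom S' X,
    mem2 a1 a2 (x \o e) y /\ mem2 b1 b2 y (z \o e)).

Lemma regular_epi_epi (Y Q S : C) (q : Hom Y Q) (u v : Hom Q S) :
  regular_epi q -> u \o q = v \o q -> u = v.
Proof.
  intros [X [f [g [Hfg Hq]]]] Huv.
  destruct (Hq S (u \o q)) as [h [_ Hh]].
  { rewrite <- !comp_assoc, Hfg; reflexivity. }
  rewrite (Hh u eq_refl), (Hh v (eq_sym Huv)); reflexivity.
Qed.

Lemma regular_epi_id (S : C) : regular_epi (idm S).
Proof.
  exists S, (idm S), (idm S). split; [reflexivity|].
  intros T k _. exists k. rewrite comp_id_r. split; [reflexivity|].
  intros h Hh. rewrite comp_id_r in Hh. exact Hh.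
Qed.

Lemma regular_epi_factor (S S' R : C) (e : Hom S' S) (t : Hom S' R) :
  regular_epi e ->
  (forall (T : C) (u v : Hom T S'), e \o u = e \o v -> t \o u = t \o v) ->
  exists h : Hom S R, h \o e = t.
Proof.
  intros [X [f [g [Hfg He]]]] Ht.
  destruct (He R t (Ht X f g Hfg)) as [h [Hh _]]. exists h; exact Hh.
Qed.

Lemma locally_id (S : C) (P : forall S' : C, Hom S' S -> Prop) :
  P S (idm S) -> locally P.
Proof. intros HP. exists S, (idm S). split; [apply regular_epi_id | exact HP]. Qed.

Lemma locally_impl (S : C) (P Q : forall S' : C, Hom S' S -> Prop) :
  locally P -> (forall S' (e : Hom S' S), P S' e -> Q S' e) -> locally Q.
Proof. intros [S' [e [He HP]]] HPQ. exists S', e. split; [exact He | exact (HPQ S' e HP)]. Qed.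

Lemma mem2_local (R X Y S : C) (r1 : Hom R X) (r2 : Hom R Y) (x : Hom S X) (y : Hom S Y) :
  jointly_monic2 r1 r2 ->
  locally (fun S' e => mem2 r1 r2 (x \o e) (y \o e)) -> mem2 r1 r2 x y.
Proof.
  intros Hr [S' [e [He [t [Ht1 Ht2]]]]].
  destruct (regular_epi_factor He (t := t)) as [h Hh].
  { intros T u v Huv. apply Hr; rewrite !comp_assoc; [rewrite Ht1 | rewrite Ht2];
      rewrite <- !comp_assoc, Huv; reflexivity. }
  exists h. split; apply (regular_epi_epi He); rewrite <- comp_assoc, Hh; assumption.
Qed.

Lemma mem3_local (R X Y Z S : C) (r1 : Hom R X) (r2 : Hom R Y) (r3 : Hom R Z)
    (x : Hom S X) (y : Hom S Y) (z : Hom S Z) :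
  jointly_monic3 r1 r2 r3 ->
  locally (fun S' e => mem3 r1 r2 r3 (x \o e) (y \o e) (z \o e)) -> mem3 r1 r2 r3 x y z.
Proof.
  intros Hr [S' [e [He [t [Ht1 [Ht2 Ht3]]]]]].
  destruct (regular_epi_factor He (t := t)) as [h Hh].
  { intros T u v Huv. apply Hr; rewrite !comp_assoc; [rewrite Ht1 | rewrite Ht2 | rewrite Ht3];
      rewrite <- !comp_assoc, Huv; reflexivity. }
  exists h. split; [|split]; apply (regular_epi_epi He); rewrite <- comp_assoc, Hh; assumption.
Qed.

Lemma mem2_precomp (R X Y S S' : C) (r1 : Hom R X) (r2 : Hom R Y)
    (x : Hom S X) (y : Hom S Y) (e : Hom S' S) :
  mem2 r1 r2 x y -> mem2 r1 r2 (x \o e) (y \o e).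
Proof. intros [h [Hx Hy]]. exists (h \o e). rewrite !comp_assoc, Hx, Hy. split; reflexivity. Qed.

Lemma mem2_self (R X Y : C) (r1 : Hom R X) (r2 : Hom R Y) : mem2 r1 r2 r1 r2.
Proof. exists (idm R). rewrite !comp_id_r. split; reflexivity. Qed.

Lemma mem2_le (X R R' S : C) (r1 r2 : Hom R X) (s1 s2 : Hom R' X) (x y : Hom S X) :
  rel_le r1 r2 s1 s2 -> mem2 r1 r2 x y -> mem2 s1 s2 x y.
Proof.
  intros [g [Hg1 Hg2]] [h [Hh1 Hh2]]. exists (g \o h).
  rewrite !comp_assoc, Hg1, Hg2. split; assumption.
Qed.

Lemma rel_le_trans (X R R' R'' : C) (r1 r2 : Hom R X) (s1 s2 : Hom R' X)
    (t1 t2 : Hom R'' X) :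
  rel_le r1 r2 s1 s2 -> rel_le s1 s2 t1 t2 -> rel_le r1 r2 t1 t2.
Proof. intros Hrs Hst. exact (mem2_le Hst Hrs). Qed.

Section Equivalence.
Variables (X R : C) (r1 r2 : Hom R X).
Hypothesis Er : equivalence_rel r1 r2.

Lemma equivalence_refl (S : C) (x : Hom S X) : mem2 r1 r2 x x.
Proof.
  destruct Er as [_ [[d [Hd1 Hd2]] _]]. exists (d \o x).
  rewrite !comp_assoc, Hd1, Hd2, comp_id_l. split; reflexivity.
Qed.

Lemma equivalence_sym (S : C) (x y : Hom S X) : mem2 r1 r2 x y -> mem2 r1 r2 y x.
Proof. exact (proj1 (proj2 (proj2 Er)) S x y). Qed.

Lemma equivalence_trans (S : C) (x y z : Hom S X) :
  mem2 r1 r2 x y -> mem2 r1 r2 y z -> mem2 r1 r2 x z.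
Proof. exact (proj2 (proj2 (proj2 Er)) S x y z). Qed.

End Equivalence.

Lemma mem2_rcomp_intro (X A B S : C) (a1 a2 : Hom A X) (b1 b2 : Hom B X)
    (x y z : Hom S X) :
  mem2 a1 a2 x y -> mem2 b1 b2 y z -> mem2_rcomp a1 a2 b1 b2 x z.
Proof. intros Hxy Hyz. apply locally_id. exists y. rewrite !comp_id_r. split; assumption. Qed.

Lemma mem2_rcomp_le (X A B T S : C) (a1 a2 : Hom A X) (b1 b2 : Hom B X)
    (t1 t2 : Hom T X) (x z : Hom S X) :
  equivalence_rel t1 t2 -> rel_le a1 a2 t1 t2 -> rel_le b1 b2 t1 t2 ->
  mem2_rcomp a1 a2 b1 b2 x z -> mem2 t1 t2 x z.
Proof.
  intros Et Ha Hb Hxz. apply (mem2_local (proj1 Et)).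
  apply (locally_impl Hxz). intros S' e [y [Hxy Hyz]].
  exact (equivalence_trans Et (mem2_le Ha Hxy) (mem2_le Hb Hyz)).
Qed.

Lemma product_ext (X Y P S : C) (p1 : Hom P X) (p2 : Hom P Y) (u v : Hom S P) :
  is_product p1 p2 -> p1 \o u = p1 \o v -> p2 \o u = p2 \o v -> u = v.
Proof.
  intros HP Hu1 Hu2.
  destruct (HP S (p1 \o u) (p2 \o u)) as [h [_ [_ Hh]]].
  rewrite (Hh u eq_refl eq_refl), (Hh v (eq_sym Hu1) (eq_sym Hu2)); reflexivity.
Qed.

Lemma product_mem2 (X Y P S : C) (p1 : Hom P X) (p2 : Hom P Y) (x : Hom S X) (y : Hom S Y) :
  is_product p1 p2 -> mem2 p1 p2 x y.
Proof. intros HP. destruct (HP S x y) as [h [Hx [Hy _]]]. exists h. split; assumption. Qed.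

Lemma pullback_ext (A B Z P S : C) (f : Hom A Z) (g : Hom B Z) (p1 : Hom P A) (p2 : Hom P B)
    (u v : Hom S P) :
  is_pullback f g p1 p2 -> p1 \o u = p1 \o v -> p2 \o u = p2 \o v -> u = v.
Proof.
  intros [Hfg HP] Hu1 Hu2.
  destruct (HP S (p1 \o u) (p2 \o u)) as [h [_ [_ Hh]]].
  { rewrite !comp_assoc, Hfg; reflexivity. }
  rewrite (Hh u eq_refl eq_refl), (Hh v (eq_sym Hu1) (eq_sym Hu2)); reflexivity.
Qed.

Lemma pullback_mem2 (A B Z P S : C) (f : Hom A Z) (g : Hom B Z) (p1 : Hom P A) (p2 : Hom P B)
    (u : Hom S A) (v : Hom S B) :
  is_pullback f g p1 p2 -> (mem2 p1 p2 u v <-> f \o u = g \o v).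
Proof.
  intros [Hfg HP]. split.
  - intros [h [Hu Hv]]. rewrite <- Hu, <- Hv, !comp_assoc, Hfg. reflexivity.
  - intros Huv. destruct (HP S u v Huv) as [h [Hu [Hv _]]]. exists h. split; assumption.
Qed.

Lemma eq_meet_join_subdistr (X A B D BC L AB AC J : C) (a1 a2 : Hom A X) (b1 b2 : Hom B X)
    (c1 c2 : Hom D X) (bc1 bc2 : Hom BC X) (l1 l2 : Hom L X) (ab1 ab2 : Hom AB X)
    (ac1 ac2 : Hom AC X) (j1 j2 : Hom J X) :
  is_eq_join b1 b2 c1 c2 bc1 bc2 -> is_eq_meet a1 a2 bc1 bc2 l1 l2 ->
  is_eq_meet a1 a2 b1 b2 ab1 ab2 -> is_eq_meet a1 a2 c1 c2 ac1 ac2 ->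
  is_eq_join ab1 ab2 ac1 ac2 j1 j2 -> rel_le j1 j2 l1 l2.
Proof.
  intros [_ [Hb_bc [Hc_bc _]]] [El [_ [_ Hl]]] [Eab [Hab_a [Hab_b _]]]
    [Eac [Hac_a [Hac_c _]]] [_ [_ [_ Hj]]].
  apply (Hj _ _ _ El).
  - exact (Hl _ _ _ Eab Hab_a (rel_le_trans Hab_b Hb_bc)).
  - exact (Hl _ _ _ Eac Hac_a (rel_le_trans Hac_c Hc_bc)).
Qed.

Lemma mem2_pullback_span (X A B P S : C) (a1 a2 : Hom A X) (b1 b2 : Hom B X)
    (pa : Hom P A) (pb : Hom P B) (x z : Hom S X) :
  is_pullback a2 b1 pa pb ->
  (mem2 (a1 \o pa) (b2 \o pb) x z <-> exists y, mem2 a1 a2 x y /\ mem2 b1 b2 y z).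
Proof.
  intros Hp. split.
  - intros [h [Hx Hz]]. exists (a2 \o (pa \o h)). split.
    + exists (pa \o h). rewrite comp_assoc. split; [exact Hx | reflexivity].
    + exists (pb \o h). rewrite !comp_assoc, (proj1 Hp). split; [reflexivity | exact Hz].
  - intros [y [[g [Hg1 Hg2]] [g' [Hg'1 Hg'2]]]].
    destruct (proj2 (pullback_mem2 g g' Hp)) as [h [Hh Hh']]; [congruence |].
    exists h. rewrite <- !comp_assoc, Hh, Hh'. split; assumption.
Qed.

Lemma mem3_fan_span (X A B D P W S : C) (a1 a2 : Hom A X) (b1 b2 : Hom B X)
    (c1 c2 : Hom D X) (pa : Hom P A) (pb : Hom P B) (w1 : Hom W P) (wc : Hom W D)
    (x y z : Hom S X) :
  is_pullback a1 b1 pa pb -> is_pullback (a1 \o pa) c1 w1 wc ->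
  (mem3 (a2 \o (pa \o w1)) (b2 \o (pb \o w1)) (c2 \o wc) x y z <->
   exists w : Hom S X, mem2 a1 a2 w x /\ mem2 b1 b2 w y /\ mem2 c1 c2 w z).
Proof.
  intros Hp Hw. split.
  - intros [h [Hx [Hy Hz]]].
    rewrite <- !comp_assoc in Hx; rewrite <- !comp_assoc in Hy; rewrite <- comp_assoc in Hz.
    exists (a1 \o (pa \o (w1 \o h))). split; [|split].
    + exists (pa \o (w1 \o h)). split; [reflexivity | exact Hx].
    + exists (pb \o (w1 \o h)). rewrite !comp_assoc, <- (proj1 Hp), <- !comp_assoc.
      split; [reflexivity | exact Hy].
    + exists (wc \o h). rewrite comp_assoc, <- (proj1 Hw), <- !comp_assoc.
      split; [reflexivity | exact Hz].
  - intros [w [[g [Hg1 Hg2]] [[g' [Hg'1 Hg'2]] [g'' [Hg''1 Hg''2]]]]].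
    destruct (proj2 (pullback_mem2 g g' Hp)) as [h1 [Hh1 Hh1']]; [congruence |].
    destruct (proj2 (pullback_mem2 h1 g'' Hw)) as [h [Hh Hh']].
    { rewrite <- comp_assoc, Hh1. congruence. }
    exists h. rewrite <- !comp_assoc, Hh', Hh, Hh1, Hh1'. split; [|split]; assumption.
Qed.

Section FiniteLimits.
Hypothesis HF : has_finite_limits C.

Lemma pullback_exists (A B Z : C) (f : Hom A Z) (g : Hom B Z) :
  exists P (p1 : Hom P A) (p2 : Hom P B), is_pullback f g p1 p2.
Proof.
  destruct HF as [_ [Hprod Heq]].
  destruct (Hprod A B) as [Q [q1 [q2 HQ]]].
  destruct (Heq Q Z (f \o q1) (g \o q2)) as [P [m [Hm HmU]]].
  exists P, (q1 \o m), (q2 \o m). split; [rewrite !comp_assoc; exact Hm|].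
  intros S a b Hab.
  destruct (HQ S a b) as [h [Ha [Hb _]]].
  destruct (HmU S h) as [k [Hk HkU]].
  { rewrite <- !comp_assoc, Ha, Hb; exact Hab. }
  exists k. rewrite <- !comp_assoc, Hk. split; [exact Ha | split; [exact Hb |]].
  intros k' Hk'1 Hk'2. apply HkU, (product_ext HQ); rewrite !comp_assoc.
  - rewrite Hk'1, Ha; reflexivity.
  - rewrite Hk'2, Hb; reflexivity.
Qed.

Lemma kernel_pair_equivalence (R Y : C) (r : Hom R Y) :
  exists K (k1 k2 : Hom K R), equivalence_rel k1 k2 /\
    forall S (u v : Hom S R), mem2 k1 k2 u v <-> r \o u = r \o v.
Proof.
  destruct (pullback_exists r r) as [K [k1 [k2 Hk]]].
  pose proof (fun S u v => pullback_mem2 (S := S) u v Hk) as Hmem.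
  exists K, k1, k2. split; [|exact Hmem].
  split; [|split; [|split]].
  - intros S u v. exact (pullback_ext Hk).
  - apply Hmem; reflexivity.
  - intros S u v Huv. apply Hmem. symmetry. apply Hmem; exact Huv.
  - intros S u v w Huv Hvw. apply Hmem. apply Hmem in Huv, Hvw. congruence.
Qed.

Lemma intersection_exists (X A B : C) (a1 a2 : Hom A X) (b1 b2 : Hom B X) :
  jointly_monic2 a1 a2 -> jointly_monic2 b1 b2 ->
  exists M (m1 m2 : Hom M X), jointly_monic2 m1 m2 /\
    forall S (x y : Hom S X), mem2 m1 m2 x y <-> mem2 a1 a2 x y /\ mem2 b1 b2 x y.
Proof.
  intros Ha Hb. destruct HF as [_ [Hprod _]].
  destruct (Hprod X X) as [Q [p1 [p2 HQ]]].
  destruct (product_mem2 a1 a2 HQ) as [ha [Ha1 Ha2]].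
  destruct (product_mem2 b1 b2 HQ) as [hb [Hb1 Hb2]].
  destruct (pullback_exists ha hb) as [M [pa [pb Hpb]]].
  assert (Hcomm : forall S (u : Hom S M),
             b1 \o (pb \o u) = a1 \o (pa \o u) /\ b2 \o (pb \o u) = a2 \o (pa \o u)).
  { intros S u. rewrite <- Ha1, <- Ha2, <- Hb1, <- Hb2, <- !comp_assoc,
      (comp_assoc hb pb u), <- (proj1 Hpb), <- !comp_assoc. split; reflexivity. }
  exists M, (a1 \o pa), (a2 \o pa). split.
  - intros S u v Hu1 Hu2. rewrite <- !comp_assoc in Hu1, Hu2.
    assert (Hu : pa \o u = pa \o v) by exact (Ha _ _ _ Hu1 Hu2).
    apply (pullback_ext Hpb); [exact Hu|].
    apply Hb; [rewrite (proj1 (Hcomm S u)), (proj1 (Hcomm S v))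
              | rewrite (proj2 (Hcomm S u)), (proj2 (Hcomm S v))]; rewrite Hu; reflexivity.
  - intros S x y. split.
    + intros [h [Hx Hy]]. rewrite <- !comp_assoc in Hx, Hy. split.
      * exists (pa \o h). split; assumption.
      * exists (pb \o h). rewrite (proj1 (Hcomm S h)), (proj2 (Hcomm S h)). split; assumption.
    + intros [[g [Hg1 Hg2]] [g' [Hg'1 Hg'2]]].
      destruct (proj2 (pullback_mem2 g g' Hpb)) as [h [Hh Hh']].
      { apply (product_ext HQ); rewrite !comp_assoc, ?Ha1, ?Ha2, ?Hb1, ?Hb2; congruence. }
      exists h. rewrite <- !comp_assoc, Hh. split; assumption.
Qed.

Lemma is_eq_meet_of_mem2 (X A B M : C) (a1 a2 : Hom A X) (b1 b2 : Hom B X)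
    (m1 m2 : Hom M X) :
  equivalence_rel a1 a2 -> equivalence_rel b1 b2 -> jointly_monic2 m1 m2 ->
  (forall S (x y : Hom S X), mem2 m1 m2 x y <-> mem2 a1 a2 x y /\ mem2 b1 b2 x y) ->
  is_eq_meet a1 a2 b1 b2 m1 m2.
Proof.
  intros Ea Eb Hm Hmem.
  split; [split; [exact Hm | split; [|split]] | split; [|split]].
  - change (mem2 m1 m2 (idm X) (idm X)).
    apply Hmem. split; apply equivalence_refl; assumption.
  - intros S x y Hxy. apply Hmem in Hxy as [Ha Hb].
    apply Hmem. split; apply equivalence_sym; assumption.
  - intros S x y z Hxy Hyz. apply Hmem in Hxy as [Ha Hb], Hyz as [Ha' Hb'].
    apply Hmem. split; [exact (equivalence_trans Ea Ha Ha') | exact (equivalence_trans Eb Hb Hb')].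
  - exact (proj1 (proj1 (Hmem _ m1 m2) (mem2_self m1 m2))).
  - exact (proj2 (proj1 (Hmem _ m1 m2) (mem2_self m1 m2))).
  - intros T t1 t2 _ Ha Hb. apply Hmem. split; assumption.
Qed.

Lemma eq_meet_exists (X A B : C) (a1 a2 : Hom A X) (b1 b2 : Hom B X) :
  equivalence_rel a1 a2 -> equivalence_rel b1 b2 ->
  exists M (m1 m2 : Hom M X), is_eq_meet a1 a2 b1 b2 m1 m2 /\
    forall S (x y : Hom S X), mem2 m1 m2 x y <-> mem2 a1 a2 x y /\ mem2 b1 b2 x y.
Proof.
  intros Ea Eb.
  destruct (intersection_exists (proj1 Ea) (proj1 Eb)) as [M [m1 [m2 [Hm Hmem]]]].
  exists M, m1, m2. split; [exact (is_eq_meet_of_mem2 Ea Eb Hm Hmem) | exact Hmem].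
Qed.

Lemma mem2_eq_meet (X A B M S : C) (a1 a2 : Hom A X) (b1 b2 : Hom B X)
    (m1 m2 : Hom M X) (x y : Hom S X) :
  equivalence_rel a1 a2 -> equivalence_rel b1 b2 -> is_eq_meet a1 a2 b1 b2 m1 m2 ->
  (mem2 m1 m2 x y <-> mem2 a1 a2 x y /\ mem2 b1 b2 x y).
Proof.
  intros Ea Eb [_ [Hma [Hmb Hmax]]]. split.
  - intros Hxy. split; [exact (mem2_le Hma Hxy) | exact (mem2_le Hmb Hxy)].
  - intros Hxy. destruct (eq_meet_exists Ea Eb) as [N [n1 [n2 [[En [Hna [Hnb _]]] Hn]]]].
    exact (mem2_le (Hmax _ _ _ En Hna Hnb) (proj2 (Hn _ x y) Hxy)).
Qed.

End FiniteLimits.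

Section Regular.
Hypothesis HR : is_regular C.

Lemma regular_epi_lift_locally (A I S : C) (q : Hom A I) (h : Hom S I) :
  regular_epi q -> locally (fun S' e => exists w : Hom S' A, q \o w = h \o e).
Proof.
  intros Hq. destruct HR as [HF [_ Hstable]].
  destruct (pullback_exists HF q h) as [P [p1 [p2 Hp]]].
  exists P, p2. split; [exact (Hstable _ _ _ _ _ _ _ _ Hq Hp) |].
  exists p1. exact (proj1 Hp).
Qed.

Lemma image_factorization (A B : C) (f : Hom A B) :
  exists I (q : Hom A I) (i : Hom I B), regular_epi q /\ i \o q = f /\ monic i.
Proof.
  destruct HR as [HF [Hcoeq _]].
  destruct (pullback_exists HF f f) as [K [k1 [k2 Hk]]].
  destruct (Hcoeq _ _ _ _ _ _ Hk) as [I [q Hq]].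
  assert (Hqr : regular_epi q) by (exists K, k1, k2; exact Hq).
  destruct Hq as [Hqk Hq].
  destruct (Hq B f (proj1 Hk)) as [i [Hi _]].
  exists I, q, i. split; [exact Hqr | split; [exact Hi |]].
  intros S u v Huv.
  destruct (regular_epi_lift_locally u Hqr) as [S1 [e1 [He1 [w1 Hw1]]]].
  destruct (regular_epi_lift_locally (v \o e1) Hqr) as [S2 [e2 [He2 [w2 Hw2]]]].
  assert (Hf : f \o (w1 \o e2) = f \o w2).
  { rewrite <- Hi, <- !comp_assoc, Hw2, (comp_assoc q w1 e2), Hw1, !comp_assoc, Huv.
    reflexivity. }
  assert (Hq12 : q \o (w1 \o e2) = q \o w2).
  { destruct (proj2 (pullback_mem2 _ _ Hk) Hf) as [k [Hk1 Hk2]].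
    rewrite <- Hk1, <- Hk2, !comp_assoc, Hqk. reflexivity. }
  apply (regular_epi_epi He1), (regular_epi_epi He2).
  rewrite <- Hw1, <- (comp_assoc q w1 e2), Hq12, Hw2. reflexivity.
Qed.

Lemma span_image2 (P X Y : C) (f1 : Hom P X) (f2 : Hom P Y) :
  exists R (r1 : Hom R X) (r2 : Hom R Y), jointly_monic2 r1 r2 /\
    forall S (x : Hom S X) (y : Hom S Y),
      mem2 r1 r2 x y <-> locally (fun S' e => mem2 f1 f2 (x \o e) (y \o e)).
Proof.
  destruct HR as [[_ [Hprod _]] _].
  destruct (Hprod X Y) as [Q [p1 [p2 HQ]]].
  destruct (product_mem2 f1 f2 HQ) as [f [Hf1 Hf2]].
  destruct (image_factorization f) as [R [q [i [Hq [Hqi Hi]]]]].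
  assert (Hr : jointly_monic2 (p1 \o i) (p2 \o i)).
  { intros S u v Hu Hv. apply Hi, (product_ext HQ); rewrite !comp_assoc; assumption. }
  exists R, (p1 \o i), (p2 \o i). split; [exact Hr |]. intros S x y. split.
  - intros [h [Hx Hy]]. apply (locally_impl (regular_epi_lift_locally h Hq)).
    intros S' e [w Hw]. exists w.
    rewrite <- Hx, <- Hy, <- Hf1, <- Hf2, <- Hqi, <- !comp_assoc, Hw. split; reflexivity.
  - intros Hloc. apply (mem2_local Hr). apply (locally_impl Hloc).
    intros S' e [w [Hw1 Hw2]]. exists (q \o w).
    rewrite <- Hw1, <- Hw2, <- Hf1, <- Hf2, <- Hqi, !comp_assoc. split; reflexivity.
Qed.

Lemma span_image3 (P X Y Z : C) (f1 : Hom P X) (f2 : Hom P Y) (f3 : Hom P Z) :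
  exists R (r1 : Hom R X) (r2 : Hom R Y) (r3 : Hom R Z), jointly_monic3 r1 r2 r3 /\
    forall S (x : Hom S X) (y : Hom S Y) (z : Hom S Z),
      mem3 r1 r2 r3 x y z <->
      locally (fun S' e => mem3 f1 f2 f3 (x \o e) (y \o e) (z \o e)).
Proof.
  destruct HR as [[_ [Hprod _]] _].
  destruct (Hprod Y Z) as [Q [p2 [p3 HQ]]].
  destruct (Hprod X Q) as [Q' [p1 [p23 HQ']]].
  destruct (product_mem2 f2 f3 HQ) as [f23 [Hf2 Hf3]].
  destruct (product_mem2 f1 f23 HQ') as [f [Hf1 Hf23]].
  destruct (image_factorization f) as [R [q [i [Hq [Hqi Hi]]]]].
  assert (Hr : jointly_monic3 (p1 \o i) (p2 \o (p23 \o i)) (p3 \o (p23 \o i))).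
  { intros S u v Hu Hv Hw. rewrite !comp_assoc in Hv, Hw.
    apply Hi, (product_ext HQ'); rewrite !comp_assoc; [exact Hu |].
    apply (product_ext HQ); rewrite !comp_assoc; assumption. }
  exists R, (p1 \o i), (p2 \o (p23 \o i)), (p3 \o (p23 \o i)). split; [exact Hr |].
  intros S x y z. split.
  - intros [h [Hx [Hy Hz]]]. apply (locally_impl (regular_epi_lift_locally h Hq)).
    intros S' e [w Hw]. exists w.
    rewrite <- Hx, <- Hy, <- Hz, <- Hf1, <- Hf2, <- Hf3, <- Hf23, <- Hqi, <- !comp_assoc, Hw.
    split; [|split]; reflexivity.
  - intros Hloc. apply (mem3_local Hr). apply (locally_impl Hloc).
    intros S' e [w [Hw1 [Hw2 Hw3]]]. exists (q \o w).
    rewrite <- Hw1, <- Hw2, <- Hw3, <- Hf1, <- Hf2, <- Hf3, <- Hf23, <- Hqi, !comp_assoc.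
    split; [|split]; reflexivity.
Qed.

Lemma rcomp_exists (X A B : C) (a1 a2 : Hom A X) (b1 b2 : Hom B X) :
  exists J (j1 j2 : Hom J X), jointly_monic2 j1 j2 /\
    forall S (x z : Hom S X), mem2 j1 j2 x z <-> mem2_rcomp a1 a2 b1 b2 x z.
Proof.
  destruct (pullback_exists (proj1 HR) a2 b1) as [P [pa [pb Hp]]].
  destruct (span_image2 (a1 \o pa) (b2 \o pb)) as [J [j1 [j2 [Hj HJ]]]].
  exists J, j1, j2. split; [exact Hj |]. intros S x z. rewrite HJ.
  split; intros Hxz; apply (locally_impl Hxz); intros S' e; apply mem2_pullback_span; exact Hp.
Qed.

Lemma fan_relation_exists (X A B D : C) (a1 a2 : Hom A X) (b1 b2 : Hom B X)
    (c1 c2 : Hom D X) :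
  exists R (r1 r2 r3 : Hom R X), jointly_monic3 r1 r2 r3 /\
    forall S (x y z : Hom S X), mem3 r1 r2 r3 x y z <->
      locally (fun S' e => exists w : Hom S' X,
        mem2 a1 a2 w (x \o e) /\ mem2 b1 b2 w (y \o e) /\ mem2 c1 c2 w (z \o e)).
Proof.
  destruct (pullback_exists (proj1 HR) a1 b1) as [P [pa [pb Hp]]].
  destruct (pullback_exists (proj1 HR) (a1 \o pa) c1) as [W [w1 [wc Hw]]].
  destruct (span_image3 (a2 \o (pa \o w1)) (b2 \o (pb \o w1)) (c2 \o wc))
    as [R [r1 [r2 [r3 [Hr HR3]]]]].
  exists R, r1, r2, r3. split; [exact Hr |]. intros S x y z. rewrite HR3.
  split; intros Hxyz; apply (locally_impl Hxyz); intros S' e; apply mem3_fan_span; assumption.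
Qed.

Lemma majority_meet_rcomp (X A B D S : C) (a1 a2 : Hom A X) (b1 b2 : Hom B X)
    (c1 c2 : Hom D X) (x y z : Hom S X) :
  is_majority C ->
  equivalence_rel a1 a2 -> equivalence_rel b1 b2 -> equivalence_rel c1 c2 ->
  mem2 a1 a2 x z -> mem2 b1 b2 x y -> mem2 c1 c2 y z ->
  locally (fun S' e => exists w : Hom S' X,
    (mem2 a1 a2 (x \o e) w /\ mem2 b1 b2 (x \o e) w) /\
    (mem2 a1 a2 w (z \o e) /\ mem2 c1 c2 w (z \o e))).
Proof.
  intros Hmaj Ea Eb Ec Hxz Hxy Hyz.
  destruct (fan_relation_exists b1 b2 a1 a2 c1 c2) as [R [r1 [r2 [r3 [Hr HR3]]]]].
  assert (Hfan : forall w p q s : Hom S X,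
             mem2 b1 b2 w p -> mem2 a1 a2 w q -> mem2 c1 c2 w s -> mem3 r1 r2 r3 p q s).
  { intros w p q s Hp Hq Hs. apply HR3, locally_id. exists w.
    rewrite !comp_id_r. split; [|split]; assumption. }
  assert (Hxxz : mem3 r1 r2 r3 x x z).
  { apply (Hmaj _ _ _ _ _ _ _ Hr S x z x y z x).
    - apply (Hfan x); apply equivalence_refl; assumption.
    - apply (Hfan y); [exact (equivalence_sym Eb Hxy) | exact (equivalence_refl Ea y) | exact Hyz].
    - apply (Hfan z); [exact (equivalence_refl Eb z) | exact (equivalence_sym Ea Hxz)
                      | exact (equivalence_refl Ec z)]. }
  apply (locally_impl (proj1 (HR3 S x x z) Hxxz)).
  intros S' e [w [Hwb [Hwa Hwc]]]. exists w. split; split.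
  - exact (equivalence_sym Ea Hwa).
  - exact (equivalence_sym Eb Hwb).
  - exact (equivalence_trans Ea Hwa (mem2_precomp e Hxz)).
  - exact Hwc.
Qed.

Section Maltsev.
Hypothesis HM : is_maltsev C.

Lemma eq_join_exists (X A B : C) (a1 a2 : Hom A X) (b1 b2 : Hom B X) :
  equivalence_rel a1 a2 -> equivalence_rel b1 b2 ->
  exists J (j1 j2 : Hom J X), is_eq_join a1 a2 b1 b2 j1 j2 /\
    forall S (x z : Hom S X), mem2 j1 j2 x z <-> mem2_rcomp a1 a2 b1 b2 x z.
Proof.
  intros Ea Eb.
  destruct (rcomp_exists a1 a2 b1 b2) as [J [j1 [j2 [Hj HJ]]]].
  assert (Ej : equivalence_rel j1 j2).
  { apply (proj2 HM _ _ _ _ Hj). apply HJ.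
    apply (mem2_rcomp_intro (y := idm X)); apply equivalence_refl; assumption. }
  exists J, j1, j2. split; [|exact HJ].
  split; [exact Ej | split; [|split]].
  - apply HJ. exact (mem2_rcomp_intro (mem2_self a1 a2) (equivalence_refl Eb a2)).
  - apply HJ. exact (mem2_rcomp_intro (equivalence_refl Ea b1) (mem2_self b1 b2)).
  - intros T t1 t2 Et Ha Hb. apply (mem2_rcomp_le Et Ha Hb), HJ, mem2_self.
Qed.

Lemma mem2_eq_join (X A B J S : C) (a1 a2 : Hom A X) (b1 b2 : Hom B X)
    (j1 j2 : Hom J X) (x z : Hom S X) :
  equivalence_rel a1 a2 -> equivalence_rel b1 b2 -> is_eq_join a1 a2 b1 b2 j1 j2 ->
  (mem2 j1 j2 x z <-> mem2_rcomp a1 a2 b1 b2 x z).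
Proof.
  intros Ea Eb [Ej [Haj [Hbj Hjmin]]]. split.
  - intros Hxz. destruct (eq_join_exists Ea Eb) as [K [k1 [k2 [[Ek [Hak [Hbk _]]] Hk]]]].
    exact (proj1 (Hk _ x z) (mem2_le (Hjmin _ _ _ Ek Hak Hbk) Hxz)).
  - exact (mem2_rcomp_le Ej Haj Hbj).
Qed.

Lemma congruence_distributive_majority : congruence_distributive C -> is_majority C.
Proof.
  intros Hcd R X Y Z r1 r2 r3 Hr S x x' y y' z z'
    [u [Hu1 [Hu2 Hu3]]] [v [Hv1 [Hv2 Hv3]]] [w [Hw1 [Hw2 Hw3]]].
  destruct (kernel_pair_equivalence (proj1 HR) r1) as [A [a1 [a2 [Ea Ha]]]].
  destruct (kernel_pair_equivalence (proj1 HR) r2) as [B [b1 [b2 [Eb Hb]]]].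
  destruct (kernel_pair_equivalence (proj1 HR) r3) as [D [c1 [c2 [Ec Hc]]]].
  destruct (eq_join_exists Eb Ec) as [BC [bc1 [bc2 [Hbc _]]]].
  destruct (eq_meet_exists (proj1 HR) Ea (proj1 Hbc)) as [L [l1 [l2 [Hl _]]]].
  destruct (eq_meet_exists (proj1 HR) Ea Eb) as [AB [ab1 [ab2 [Hab _]]]].
  destruct (eq_meet_exists (proj1 HR) Ea Ec) as [AC [ac1 [ac2 [Hac _]]]].
  destruct (eq_join_exists (proj1 Hab) (proj1 Hac)) as [J [j1 [j2 [Hj _]]]].
  destruct (proj2 (Hcd R) _ _ _ _ _ _ _ _ _ _ _ _ _ _ _ _ _ _ _ _ _ _ _ _
              Ea Eb Ec Hbc Hl Hab Hac Hj) as [Hlj _].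
  assert (Huv : mem2 l1 l2 u v).
  { apply (mem2_eq_meet (proj1 HR) u v Ea (proj1 Hbc) Hl). split.
    - apply Ha. congruence.
    - apply (mem2_eq_join u v Eb Ec Hbc).
      apply (mem2_rcomp_intro (y := w)); [apply Hb | apply Hc]; congruence. }
  destruct (proj1 (mem2_eq_join u v (proj1 Hab) (proj1 Hac) Hj) (mem2_le Hlj Huv))
    as [S' [e [He [t [Hut Htv]]]]].
  apply (mem2_eq_meet (proj1 HR) _ _ Ea Eb Hab) in Hut as [Hut1 Hut2].
  apply (mem2_eq_meet (proj1 HR) _ _ Ea Ec Hac) in Htv as [_ Htv3].
  apply Ha in Hut1. apply Hb in Hut2. apply Hc in Htv3.
  apply (mem3_local Hr). exists S', e. split; [exact He |]. exists t.
  rewrite <- Hut1, <- Hut2, Htv3, !comp_assoc, Hu1, Hu2, Hv3. split; [|split]; reflexivity.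
Qed.

Lemma majority_congruence_distributive : is_majority C -> congruence_distributive C.
Proof.
  intros Hmaj X. split.
  - intros A B a1 a2 b1 b2 Ea Eb. split.
    + destruct (eq_meet_exists (proj1 HR) Ea Eb) as [M [m1 [m2 [Hm _]]]].
      exists M, m1, m2. exact Hm.
    + destruct (eq_join_exists Ea Eb) as [J [j1 [j2 [Hj _]]]].
      exists J, j1, j2. exact Hj.
  - intros A B D a1 a2 b1 b2 c1 c2 BC bc1 bc2 L l1 l2 AB ab1 ab2 AC ac1 ac2 J j1 j2
      Ea Eb Ec Hbc Hl Hab Hac Hj.
    split; [| exact (eq_meet_join_subdistr Hbc Hl Hab Hac Hj)].
    change (mem2 j1 j2 l1 l2).
    destruct (proj1 (mem2_eq_meet (proj1 HR) l1 l2 Ea (proj1 Hbc) Hl) (mem2_self l1 l2))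
      as [Hla Hlbc].
    destruct (proj1 (mem2_eq_join l1 l2 Eb Ec Hbc) Hlbc) as [S' [e [He [y [Hly Hyl]]]]].
    (* Descending along e before taking the second cover avoids composing regular epis. *)
    apply (mem2_local (proj1 (proj1 Hj))). exists S', e. split; [exact He |].
    apply (mem2_eq_join _ _ (proj1 Hab) (proj1 Hac) Hj).
    apply (locally_impl (majority_meet_rcomp Hmaj Ea Eb Ec (mem2_precomp e Hla) Hly Hyl)).
    intros S'' e' [w [Hxw Hwz]]. exists w. split.
    + apply (mem2_eq_meet (proj1 HR) _ _ Ea Eb Hab). exact Hxw.
    + apply (mem2_eq_meet (proj1 HR) _ _ Ea Ec Hac). exact Hwz.
Qed.

End Maltsev.

End Regular.

End RegularMaltsev.

Theorem corollary3p6 (C : Category) :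
  is_regular C -> is_maltsev C ->
  (congruence_distributive C <-> is_majority C).
Proof.
  intros HR HM. split.
  - exact (congruence_distributive_majority HR HM).
  - exact (majority_congruence_distributive HR HM).
Qed.
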